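(* For all integers $N,p\ge1$, $$\delta_p(2,N)=\frac{1}{2^{p-1}}\sum_{k\ge0}\binom{p}{2k}\int_{\mathbb T^N}\left|\frac{q_1+\cdots+q_N}{N}\right|^{2k}dq,$$ where $dq$ is the normalized Haar (uniform) measure on $\mathbb T^N$.
   Context: For integers $M,N,p\ge1$, $\delta_p(M,N)=\frac{1}{(MN)^p}\#\{(a,b)\in\mathbb Z_M^p\times\mathbb Z_N^p:\{(a_y,b_y)\}_{y=1}^p=\{(a_y,b_{y+1})\}_{y=1}^p\text{ as multisets}\}$, with $b_{p+1}=b_1$. *)

From HB Require Import structures.
From mathcomp Require Import all_boot.
From Stdlib Require Import Reals ClassicalEpsilon.

Set Implicit Arguments.
Unset Strict Implicit.
Unset Printing Implicit Defensive.

(* Number of (a,b) in Z_M^p x Z_N^p (Z_M represented by 'I_M) such that the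
   multisets {(a_y,b_y)}_y and {(a_y,b_{y+1})}_y coincide, indices mod p
   (ordS = cyclic successor on 'I_p). *)
Definition delta_count (M N p : nat) : nat :=
  #|[set ab : {ffun 'I_p -> 'I_M} * {ffun 'I_p -> 'I_N} |
      perm_eq [seq (ab.1 y, ab.2 y) | y <- enum 'I_p]
              [seq (ab.1 y, ab.2 (ordS y)) | y <- enum 'I_p]]|.

Open Scope R_scope.

Definition delta (p M N : nat) : R :=
  INR (delta_count M N p) / (INR M * INR N) ^ p.

(* The Riemann integral of f over [0,1] (junk value if f is not integrable). *)
Definition int01 (f : R -> R) : R :=
  epsilon (inhabits 0)
    (fun I => forall pr : Riemann_integrable f 0 1, RiemannInt pr = I).

Definition upd (th : nat -> R) (n : nat) (t : R) : nat -> R :=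
  fun j => if Nat.eqb j n then t else th j.

(* Iterated integral over [0,1]^n of F, a function of the coordinates
   th 0, ..., th (n-1): this is the integral against the normalized Haar
   measure of T^n under q_j = exp(2 pi i th_j). *)
Fixpoint torus_int (n : nat) (F : (nat -> R) -> R) : R :=
  match n with
  | O => F (fun _ => 0)
  | S m => int01 (fun t => torus_int m (fun th => F (upd th m t)))
  end.

Definition rsum (N : nat) (f : nat -> R) : R := foldr Rplus 0 (map f (iota 0 N)).

Definition mean_abs (N : nat) (th : nat -> R) : R :=
  let re := rsum N (fun j => cos (2 * PI * th j)) / INR N in
  let im := rsum N (fun j => sin (2 * PI * th j)) / INR N in
  sqrt (re ^ 2 + im ^ 2).

(** Let D and U be the positions where the binary cyclic word a steps down
    from 1 to 0, resp. up from 0 to 1.  Sorting the pairs (a_y, b_y) and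
    (a_y, b_(y+1)) by the value of a shows that (a, b) is counted iff b takes
    every value equally often on D and on U.  As |D| = |U| and a is determined
    by a_0 and the set D ∪ U of even size, there are 2 C(p, 2k) words with
    |D| = k.  For each of them, expanding
    (q_1 + ... + q_N)^k (conj q_1 + ... + conj q_N)^k N^(p-2k) over all maps b
    and integrating over the torus keeps exactly the monomials of degree zero,
    i.e. the balanced b; so the number of admissible b is
    N^p ∫ |(q_1 + ... + q_N)/N|^(2k) dq. *)

From Stdlib Require Import Reals Lra ClassicalEpsilon FunctionalExtensionality.
From Coquelicot Require Import Coquelicot.
From mathcomp Require Import all_boot ssralg ssrnum ssrint Rstruct.
From mathcomp.real_closed Require Import complex.

Set Implicit Arguments.
Unset Strict Implicit.
Unset Printing Implicit Defensive.

Import GRing.Theory.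
Local Open Scope nat_scope.

Lemma count_mem_map_enum (T : finType) (X : eqType) (f : T -> X) (x : X) :
  count_mem x [seq f y | y <- enum T] = #|[set y | f y == x]|.
Proof.
rewrite count_map -sum1_count big_enum_cond /= sum1_card.
by apply: eq_card => y; rewrite !inE.
Qed.

Lemma perm_eq_map_enumP (T : finType) (X : eqType) (f g : T -> X) :
  reflect (forall x, #|[set y | f y == x]| = #|[set y | g y == x]|)
          (perm_eq [seq f y | y <- enum T] [seq g y | y <- enum T]).
Proof.
apply: (iffP idP) => [/permP eq_count x | eq_card].
  by rewrite -!count_mem_map_enum eq_count.
by apply/allP => x _; rewrite /= !count_mem_map_enum eq_card.
Qed.

Lemma eq_card_setD (T : finType) (A B : {set T}) :
  (#|A| == #|B|) = (#|A :\: B| == #|B :\: A|).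
Proof. by rewrite -(cardsID B A) -(cardsID A B) setIC eqn_add2l. Qed.

Lemma ordinal2P (i : 'I_2) : i = ord0 \/ i = ord_max.
Proof. by case: i => [[|[|//]]] ?; [left|right]; apply: val_inj. Qed.

Lemma ltn_ord2 (i j : 'I_2) : (i < j) = (i == ord0) && (j != ord0).
Proof. by case: (ordinal2P i) => ->; case: (ordinal2P j) => ->. Qed.

Lemma ord2_neq_inj (x x' z : 'I_2) : (x != z) = (x' != z) -> x = x'.
Proof.
by case: (ordinal2P x) => ->; case: (ordinal2P x') => ->; case: (ordinal2P z) => ->.
Qed.

Definition balanced (Y : finType) N (A B : {set Y}) (b : Y -> 'I_N) : bool :=
  [forall be, #|[set y in A | b y == be]| == #|[set y in B | b y == be]|].

Section CyclicWords.

Variable p : nat.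
Implicit Types (a : 'I_p -> 'I_2) (y : 'I_p).

Definition descents a : {set 'I_p} := [set y | a y < a (ord_pred y)].
Definition ascents a : {set 'I_p} := [set y | a (ord_pred y) < a y].
Definition changes a : {set 'I_p} := [set y | a y != a (ord_pred y)].

Lemma card_shift_pred (A : {set 'I_p}) : #|[set y | ord_pred y \in A]| = #|A|.
Proof. exact: (card_preimset _ (can_inj (@ord_predK p))). Qed.

Lemma card_descents_ascents a : #|descents a| = #|ascents a|.
Proof.
set S := [set y | a y == ord0].
have /eqP := card_shift_pred S; rewrite eq_card_setD => /eqP eq_diff.
have -> : descents a = S :\: [set y | ord_pred y \in S].
  by apply/setP => y; rewrite !inE ltn_ord2 andbC.
by rewrite -eq_diff; apply: eq_card => y; rewrite !inE ltn_ord2 andbC.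
Qed.

Lemma perm_eq_shift_balanced N a (b : 'I_p -> 'I_N) :
  perm_eq [seq (a y, b y) | y <- enum 'I_p] [seq (a y, b (ordS y)) | y <- enum 'I_p]
  = balanced (descents a) (ascents a) b.
Proof.
have shift x : #|[set y | (a y, b (ordS y)) == x]|
             = #|[set y | (a (ord_pred y), b y) == x]|.
  rewrite -[RHS](card_preimset _ (can_inj (@ordSK p))).
  by apply: eq_card => y; rewrite !inE ordSK.
have step al be :
    (#|[set y | (a y, b y) == (al, be)]| == #|[set y | (a (ord_pred y), b y) == (al, be)]|)
    = (#|[set y in descents a | b y == be]| == #|[set y in ascents a | b y == be]|).
  rewrite eq_card_setD; case: (ordinal2P al) => ->; last rewrite [RHS]eq_sym;
    congr (_ == _); apply: eq_card => y; rewrite !inE !xpair_eqE ltn_ord2;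
    by case: (ordinal2P (a y)) => ->; case: (ordinal2P (a (ord_pred y))) => ->;
       case: (b y == be).
apply/perm_eq_map_enumP/forallP => [eq_cards be | bal [al be]].
  by rewrite -(step ord0) -shift eq_cards.
by apply/eqP; rewrite shift step bal.
Qed.

Lemma disjoint_descents_ascents a : [disjoint descents a & ascents a].
Proof. by rewrite disjoints_subset; apply/subsetP => y; rewrite !inE -leqNgt => /ltnW. Qed.

Lemma card_changes a : #|changes a| = 2 * #|descents a|.
Proof.
rewrite -(cardsID (descents a)) mul2n -addnn {2}card_descents_ascents.
by congr (_ + _); apply: eq_card => y; rewrite !inE !ltn_ord2;
  case: (ordinal2P (a y)) => ->; case: (ordinal2P (a (ord_pred y))) => ->.
Qed.

End CyclicWords.

Lemma first_changes_inj q :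
  injective (fun a : {ffun 'I_q.+1 -> 'I_2} => (a ord0, changes a)).
Proof.
move=> a a' [eq0 eq_changes]; apply/ffunP => -[n lt_n].
elim: n lt_n => [|n IHn] lt_n; first by rewrite (_ : Ordinal _ = ord0) //; apply: val_inj.
have lt_n' : n < q.+1 := ltnW lt_n.
have pred_n : ord_pred (Ordinal lt_n) = Ordinal lt_n'.
  by apply: val_inj; rewrite /= modnDr modn_small.
apply: (@ord2_neq_inj _ _ (a' (Ordinal lt_n'))).
by move/setP/(_ (Ordinal lt_n)): eq_changes; rewrite !inE pred_n IHn.
Qed.

Lemma card_even_subsets (T : finType) (x0 : T) :
  #|[set A : {set T} | ~~ odd #|A|]| = 2 ^ #|T|.-1.
Proof.
pose tog (A : {set T}) := if x0 \in A then A :\ x0 else x0 |: A.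
have togK : involutive tog.
  by move=> A; rewrite /tog; case: (boolP (x0 \in A)) => A_x0;
    rewrite !inE eqxx /= ?setD1K ?setU1K.
have odd_tog A : odd #|tog A| = ~~ odd #|A|.
  rewrite /tog; case: ifP => A_x0; last by rewrite cardsU1 A_x0.
  by rewrite [in RHS](cardsD1 x0) A_x0 negbK.
set E := [set A : {set T} | ~~ odd #|A|].
have card_compl : #|~: E| = #|E|.
  rewrite -(card_imset (mem E) (inv_inj togK)) (can_imset_pre _ togK).
  by apply: eq_card => A; rewrite !inE odd_tog negbK.
have T_gt0 : 0 < #|T| by apply/card_gt0P; exists x0.
move: (cardsC E); rewrite card_compl addnn -cardsT -powersetT card_powerset cardsT.
by rewrite -(prednK T_gt0) expnS -mul2n => /eqP; rewrite eqn_mul2l => /eqP.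
Qed.

Lemma card_words_descents q k :
  #|[set a : {ffun 'I_q.+1 -> 'I_2} | #|descents a| == k]| = 2 * 'C(q.+1, 2 * k).
Proof.
pose f (a : {ffun 'I_q.+1 -> 'I_2}) := (a ord0, changes a).
have f_inj : injective f := @first_changes_inj q.
have im_f : f @: setT = setX [set: 'I_2] [set T : {set 'I_q.+1} | ~~ odd #|T|].
  apply/eqP; rewrite eqEcard cardsX (card_even_subsets ord0) (card_imset _ f_inj).
  rewrite !cardsT card_ffun !card_ord expnS leqnn andbT.
  by apply/subsetP => _ /imsetP[a _ ->]; rewrite !inE card_changes mul2n odd_double.
rewrite -(card_imset _ f_inj).
have -> : f @: [set a : {ffun 'I_q.+1 -> 'I_2} | #|descents a| == k]
          = setX [set: 'I_2] [set T : {set 'I_q.+1} | #|T| == 2 * k].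
  apply/setP => -[x T]; rewrite !inE /=; apply/imsetP/idP => [[a]|size_T].
    by rewrite inE => /eqP <- [_ ->]; rewrite card_changes.
  have : (x, T) \in f @: setT by rewrite im_f !inE (eqP size_T) mul2n odd_double.
  case/imsetP => a _ fa; exists a => //.
  by move: fa => [_ T_eq]; rewrite inE -(eqn_pmul2l (isT : 0 < 2)) -card_changes -T_eq.
by rewrite cardsX cardsT card_ord card_draws card_ord.
Qed.

Lemma sum_by_value (T : finType) (V : nmodType) n (g : T -> nat) (F : nat -> V) :
  (forall x, g x <= n) ->
  (\sum_x F (g x) = \sum_(k < n.+1) F k *+ #|[set x | g x == k]|)%R.
Proof.
move=> g_le; rewrite (partition_big (fun x => inord (g x) : 'I_n.+1) xpredT) //=.
have gK x : @inord n (g x) = g x :> nat by rewrite inordK // ltnS g_le.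
apply: eq_bigr => k _; rewrite -sumr_const.
by apply: eq_big => [x|x /eqP <-]; rewrite ?inE -?val_eqE /= gK.
Qed.

Lemma sum_descents q (V : nmodType) (F : nat -> V) :
  (\sum_(a : {ffun 'I_q.+1 -> 'I_2}) F #|descents a|
   = \sum_(k < q.+2) F k *+ (2 * 'C(q.+1, 2 * k)))%R.
Proof.
rewrite (@sum_by_value _ _ q.+1) => [|a]; last by rewrite (leq_trans (max_card _)) ?card_ord.
by apply: eq_bigr => k _; rewrite card_words_descents.
Qed.

Local Open Scope ring_scope.
Local Open Scope R_scope.

Lemma int01_RInt (f : R -> R) (v : R) : is_RInt f 0 1 v -> int01 f = v.
Proof.
move=> f_v; have f_int : ex_RInt f 0 1 by exists v.
have value (pr : Riemann_integrable f 0 1) : RiemannInt pr = v.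
  by rewrite (RiemannInt_P5 pr (ex_RInt_Reals_0 _ _ _ f_int)) -RInt_Reals;
    apply: is_RInt_unique.
have := epsilon_spec (inhabits 0)
  (fun I => forall pr : Riemann_integrable f 0 1, RiemannInt pr = I) (ex_intro _ v value).
by move/(_ (ex_RInt_Reals_0 _ _ _ f_int)); rewrite value.
Qed.

Lemma sin_period_int (x : R) (k : int) : sin (x + 2 * PI * k%:~R) = sin x.
Proof.
case: k => n; last rewrite NegzE mulrNz.
  by rewrite -pmulrn -INRE Rmult_assoc (Rmult_comm PI) -Rmult_assoc sin_period.
rewrite -pmulrn -INRE -RoppE.
set y := x + _; have -> : x = y + 2 * INR n.+1 * PI by rewrite /y; ring.
by rewrite sin_period.
Qed.

Lemma is_RInt_cos_int (v phi : R) (k : int) :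
  is_RInt (fun t => v * cos (2 * PI * k%:~R * t + phi)) 0 1
          (if (k == 0)%R then v * cos phi else 0).
Proof.
have [->|k_neq0] := eqVneq k 0%R.
  apply: (is_RInt_ext (fun _ => v * cos phi)) => [t _|].
    by rewrite mulr0z Rmult_0_r Rmult_0_l Rplus_0_l.
  by have := is_RInt_const 0 1 (v * cos phi); rewrite /scal /= /mult /= Rminus_0_r Rmult_1_l.
have kR_neq0 : k%:~R <> 0 :> R by apply/eqP; rewrite intr_eq0.
set F := fun t => v * sin (2 * PI * k%:~R * t + phi) / (2 * PI * k%:~R).
have F_01 : minus (F 1) (F 0) = 0.
  rewrite /minus /plus /opp /= /F Rmult_1_r Rmult_0_r Rplus_0_l.
  by rewrite (Rplus_comm _ phi) sin_period_int; ring.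
rewrite -[X in is_RInt _ _ _ X]F_01.
apply: (@is_RInt_derive R_CompleteNormedModule F) => t _.
  by rewrite /F; auto_derive => //; field; split; [exact: kR_neq0|exact: PI_neq0].
by apply: ex_derive_continuous; auto_derive.
Qed.

Lemma is_RInt_sum_cos_int (X : Type) (s : seq X) (P : pred X) (k : X -> int)
    (w phi : X -> R) :
  is_RInt (fun t => \sum_(x <- s | P x) w x * cos (2 * PI * (k x)%:~R * t + phi x)) 0 1
          (\sum_(x <- s | P x && (k x == 0%R)) w x * cos (phi x)).
Proof.
elim: s => [|x s IHs].
  apply: (is_RInt_ext (fun _ => 0)) => [t _|]; first by rewrite big_nil.
  by rewrite big_nil; have := is_RInt_const 0 1 0; rewrite /scal /= /mult /= Rmult_0_r.
rewrite big_cons; case Px: (P x) => /=; last first.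
  by apply: (is_RInt_ext _ _ _ _ _ _ IHs) => t _; rewrite big_cons Px.
apply: (is_RInt_ext (fun t => w x * cos (2 * PI * (k x)%:~R * t + phi x) +
     \sum_(x <- s | P x) w x * cos (2 * PI * (k x)%:~R * t + phi x))) => [t _|].
  by rewrite big_cons Px.
have := is_RInt_plus _ _ _ _ _ _ (@is_RInt_cos_int (w x) (phi x) (k x)) IHs.
by rewrite /plus /=; case: ifP => // _; rewrite Rplus_0_l.
Qed.

Definition lin_comb (n : nat) (c : nat -> int) (th : nat -> R) : R :=
  \sum_(l < n) (c l)%:~R * th l.

Definition zero_below (n : nat) (c : nat -> int) : bool :=
  all (fun l => c l == 0%R) (iota 0 n).

Lemma lin_combS n c th : lin_comb n.+1 c th = lin_comb n c th + (c n)%:~R * th n.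
Proof. by rewrite /lin_comb big_ord_recr. Qed.

Lemma lin_comb_upd n c th t : lin_comb n c (upd th n t) = lin_comb n c th.
Proof.
apply: eq_bigr => l _; rewrite /upd; case: Nat.eqb_spec => // eq_l.
by move: (ltn_ord l); rewrite eq_l ltnn.
Qed.

Lemma zero_belowS n c : zero_below n.+1 c = zero_below n c && (c n == 0%R).
Proof. by rewrite /zero_below -addn1 iotaD all_cat /= andbT. Qed.

Lemma torus_int_sum_cos n (X : Type) (s : seq X) (c : X -> nat -> int) (w phi : X -> R) :
  torus_int n (fun th => \sum_(x <- s) w x * cos (2 * PI * lin_comb n (c x) th + phi x))
  = \sum_(x <- s | zero_below n (c x)) w x * cos (phi x).
Proof.
elim: n w phi => [|m IHm] w phi /=.
  by apply: eq_bigr => x _; rewrite /lin_comb big_ord0 Rmult_0_r Rplus_0_l.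
have -> : (fun t => torus_int m (fun th =>
             \sum_(x <- s) w x * cos (2 * PI * lin_comb m.+1 (c x) (upd th m t) + phi x)))
        = (fun t => \sum_(x <- s | zero_below m (c x))
                      w x * cos (2 * PI * (c x m)%:~R * t + phi x)).
  apply: functional_extensionality => t; rewrite -IHm; congr torus_int.
  apply: functional_extensionality => th; apply: eq_bigr => x _.
  by rewrite lin_combS lin_comb_upd /upd Nat.eqb_refl; congr (_ * cos _); ring.
rewrite (int01_RInt (@is_RInt_sum_cos_int _ _ _ _ _ _)).
by apply: eq_bigl => x; rewrite zero_belowS.
Qed.

Section Exponentials.

Local Open Scope ring_scope.

Definition cis (x : R) : R[i] := Complex (cos x) (sin x).

Lemma cisD (x y : R) : cis (x + y) = cis x * cis y.
Proof. by rewrite /cis cos_plus sin_plus (Rplus_comm (sin x * cos y)). Qed.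

Lemma cis0 : cis 0 = 1.
Proof. by rewrite /cis cos_0 sin_0. Qed.

Lemma cis_sum (I : Type) (r : seq I) (P : pred I) (f : I -> R) :
  \prod_(i <- r | P i) cis (f i) = cis (\sum_(i <- r | P i) f i).
Proof. by rewrite (big_morph cis cisD cis0). Qed.

Lemma Re_sum (I : Type) (r : seq I) (P : pred I) (F : I -> R[i]) :
  Re (\sum_(i <- r | P i) F i) = \sum_(i <- r | P i) Re (F i).
Proof. by apply: (big_morph (@Re R)) => [[a b] [c d]|]. Qed.

Lemma Im_sum (I : Type) (r : seq I) (P : pred I) (F : I -> R[i]) :
  Im (\sum_(i <- r | P i) F i) = \sum_(i <- r | P i) Im (F i).
Proof. by apply: (big_morph (@Im R)) => [[a b] [c d]|]. Qed.

End Exponentials.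

Definition weight (Y : finType) N (s : Y -> int) (b : Y -> 'I_N) (l : nat) : int :=
  \sum_(y | b y == l :> nat) s y.

Lemma lin_comb_weight (Y : finType) N (s : Y -> int) (b : Y -> 'I_N) th :
  lin_comb N (weight s b) th = \sum_y (s y)%:~R * th (b y).
Proof.
rewrite /lin_comb; under eq_bigr => l _ do rewrite /weight mulrz_sumr mulr_suml big_mkcond.
rewrite exchange_big; apply: eq_bigr => y _.
rewrite (bigD1 (b y)) //= eqxx big1 ?addr0 // => l /negbTE l_neq.
by case: eqP => // /val_inj b_l; rewrite b_l eqxx in l_neq.
Qed.

(* With q_be = cis (2 PI th_be), this is the product over y of
   q_1 ^ s y + ... + q_N ^ s y. *)
Definition power_sum_prod (Y : finType) N (s : Y -> int) (th : nat -> R) : R[i] :=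
  \prod_(y : Y) \sum_(be < N) cis (2 * PI * ((s y)%:~R * th be)).

(* The constant [w] is kept under the integral because [torus_int] is not
   known to be linear. *)
Lemma torus_int_Re_power_sum_prod (Y : finType) N (s : Y -> int) (w : R) :
  torus_int N (fun th => w * Re (power_sum_prod N s th))
  = w * INR #|[set b : {ffun Y -> 'I_N} | zero_below N (weight s b)]|.
Proof.
have expand (th : nat -> R) : w * Re (power_sum_prod N s th)
    = \sum_(b : {ffun Y -> 'I_N}) w * cos (2 * PI * lin_comb N (weight s b) th + 0).
  rewrite /power_sum_prod bigA_distr_bigA Re_sum RmultE mulr_sumr; apply: eq_bigr => b _.
  by rewrite cis_sum -mulr_sumr lin_comb_weight Rplus_0_r.
rewrite (functional_extensionality _ _ expand) torus_int_sum_cos.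
rewrite INRE RmultE mulr_natr -sumr_const big_mkcond [RHS]big_mkcond /=.
by apply: eq_bigr => b _; rewrite inE cos_0 mulr1.
Qed.

Definition sign_in (Y : finType) (A B : {set Y}) (y : Y) : int :=
  ((y \in A)%:R - (y \in B)%:R)%R.

Lemma weight_sign_in (Y : finType) N (A B : {set Y}) (b : Y -> 'I_N) (l : nat) :
  weight (sign_in A B) b l
  = (#|[set y in A | b y == l :> nat]|%:R - #|[set y in B | b y == l :> nat]|%:R)%R.
Proof.
have count_in (C : {set Y}) :
    (\sum_(y | b y == l :> nat) ((y \in C) : nat))%N = #|[set y in C | b y == l :> nat]|.
  rewrite -sum1_card big_mkcond [RHS]big_mkcond; apply: eq_bigr => y _.
  by rewrite !inE; case: (y \in C); case: (_ == _).
by rewrite /weight /sign_in sumrB -!natr_sum !count_in.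
Qed.

Lemma zero_below_weight_sign_in (Y : finType) N (A B : {set Y}) (b : Y -> 'I_N) :
  zero_below N (weight (sign_in A B) b) = balanced A B b.
Proof.
apply/allP/forallP => [vanish be | bal l].
  have := vanish be; rewrite mem_iota ltn_ord => /(_ isT).
  by rewrite weight_sign_in subr_eq0 Num.Theory.eqr_nat.
rewrite mem_iota /= => lt_lN; have := bal (Ordinal lt_lN).
by rewrite weight_sign_in subr_eq0 Num.Theory.eqr_nat.
Qed.

Section CircleSums.

Local Open Scope ring_scope.

Variables (N : nat) (th : nat -> R).

Definition qsum : R[i] := \sum_(be < N) cis (2 * PI * th be).
Definition qsum_conj : R[i] := \sum_(be < N) cis (- (2 * PI * th be)).

Lemma power_sum_prod_sign_in (Y : finType) (A B : {set Y}) : [disjoint A & B] ->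
  power_sum_prod N (sign_in A B) th
  = qsum ^+ #|A| * qsum_conj ^+ #|B| * N%:R ^+ #|~: (A :|: B)|.
Proof.
move=> /disjoint_setI0 AB0; rewrite /power_sum_prod.
have notB y : y \in A -> y \notin B.
  by move=> yA; apply/negP => yB; move/setP/(_ y): AB0; rewrite !inE yA yB.
rewrite (bigID (mem A)) /= [X in _ * X](bigID (mem B)) /= mulrA.
congr (_ * _ * _).
- rewrite -prodr_const; apply: eq_bigr => y yA.
  rewrite /sign_in yA (negbTE (notB y yA)) /= mulr1n subr0 mulr1z.
  by apply: eq_bigr => be _; rewrite Rmult_1_l.
- rewrite (eq_bigl (fun y => y \in B)) => [|y]; last first.
    by case yA: (y \in A); rewrite //= (negbTE (notB _ yA)).
  rewrite -prodr_const; apply: eq_bigr => y yB.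
  have yA : y \notin A by apply: contraL yB; apply: notB.
  rewrite /sign_in (negbTE yA) yB /= mulr1n sub0r mulrNz mulr1z.
  by apply: eq_bigr => be _; rewrite -R1E -RoppE; congr cis; ring.
- rewrite (eq_bigl (fun y => y \in ~: (A :|: B))) => [|y]; last by rewrite !inE negb_or.
  rewrite -prodr_const; apply: eq_bigr => y.
  rewrite !inE negb_or => /andP[/negbTE yA /negbTE yB].
  rewrite /sign_in yA yB /= subr0 mulr0z.
  by under eq_bigr do rewrite Rmult_0_l Rmult_0_r cis0; rewrite sumr_const card_ord.
Qed.

End CircleSums.

Lemma rsum_big N (f : nat -> R) : rsum N f = \sum_(j < N) f j.
Proof. by rewrite /rsum foldrE big_map -(subn0 N) -/(index_iota 0 N) big_mkord subn0. Qed.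

Lemma qsum_mul_conj N (th : nat -> R) : (0 < N)%N ->
  (qsum N th * qsum_conj N th)%R = Complex ((INR N * mean_abs N th) ^ 2) 0.
Proof.
move=> N_gt0; have N_neq0 : INR N <> 0 by apply: not_0_INR; case: N N_gt0.
set C := rsum N (fun j => cos (2 * PI * th j)).
set S := rsum N (fun j => sin (2 * PI * th j)).
have -> : (INR N * mean_abs N th) ^ 2 = C * C + S * S.
  rewrite Rpow_mult_distr /mean_abs pow2_sqrt -/C -/S; first by field.
  by apply: Rplus_le_le_0_compat; apply: pow2_ge_0.
have -> : qsum N th = Complex C S.
  by apply/eqP; rewrite eq_complex /qsum Re_sum Im_sum /C /S !rsum_big !eqxx.
have -> : qsum_conj N th = Complex C (- S).
  apply/eqP; rewrite eq_complex /qsum_conj Re_sum Im_sum /C /S !rsum_big RoppE -sumrN.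
  by apply/andP; split; apply/eqP; apply: eq_bigr => j _ /=; rewrite ?cos_neg ?sin_neg.
by congr Complex; rewrite mulrN ?opprK // mulrC addNr.
Qed.

Lemma Re_power_sum_prod_sign_in (Y : finType) N (th : nat -> R) (A B : {set Y}) k :
  (0 < N)%N -> [disjoint A & B] -> #|A| = k -> #|B| = k ->
  Re (power_sum_prod N (sign_in A B) th) = INR N ^ #|Y| * mean_abs N th ^ (2 * k).
Proof.
move=> N_gt0 dAB cardA cardB.
have cardY : #|Y| = (2 * k + #|~: (A :|: B)|)%N.
  rewrite -(cardsC (A :|: B)) cardsU (disjoint_setI0 dAB) cards0 subn0.
  by rewrite cardA cardB addnn mul2n.
rewrite power_sum_prod_sign_in // cardA cardB -exprMn qsum_mul_conj // complexr0.
rewrite -(rmorph_nat (real_complex R)) -!(rmorphXn (real_complex R)) -rmorphM.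
rewrite (_ : forall x, Re (real_complex R x) = x) // !RpowE -exprM exprMn.
by rewrite INRE cardY exprD mulrAC.
Qed.

Lemma card_balanced_torus_int (Y : finType) N (A B : {set Y}) k :
  (0 < N)%N -> [disjoint A & B] -> #|A| = k -> #|B| = k ->
  INR #|[set b : {ffun Y -> 'I_N} | balanced A B b]|
  = INR N ^ #|Y| * torus_int N (fun th => mean_abs N th ^ (2 * k)).
Proof.
move=> N_gt0 dAB cardA cardB.
have NY_neq0 : INR N ^ #|Y| <> 0 by apply/pow_nonzero/not_0_INR; case: N N_gt0.
have pointwise (th : nat -> R) : mean_abs N th ^ (2 * k)
    = / INR N ^ #|Y| * Re (power_sum_prod N (sign_in A B) th).
  by rewrite (Re_power_sum_prod_sign_in th N_gt0 dAB cardA cardB); field.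
rewrite (functional_extensionality _ _ pointwise) torus_int_Re_power_sum_prod.
rewrite (eq_card (B := [set b : {ffun Y -> 'I_N} | balanced A B b])) => [|b]; first by field.
by rewrite !inE zero_below_weight_sign_in.
Qed.

Lemma delta_count_balanced p N :
  delta_count 2 N p = (\sum_(a : {ffun 'I_p -> 'I_2})
    #|[set b : {ffun 'I_p -> 'I_N} | balanced (descents a) (ascents a) b]|)%N.
Proof.
rewrite /delta_count -sum1_card big_mkcond /=.
under [RHS]eq_bigr => a _ do rewrite -sum1_card big_mkcond /=.
by rewrite pair_bigA; apply: eq_bigr => -[a b] _; rewrite !inE perm_eq_shift_balanced.
Qed.

Lemma card_balanced_descents q N (a : {ffun 'I_q.+1 -> 'I_2}) : (0 < N)%N ->
  INR #|[set b : {ffun 'I_q.+1 -> 'I_N} | balanced (descents a) (ascents a) b]|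
  = INR N ^ q.+1 * torus_int N (fun th => mean_abs N th ^ (2 * #|descents a|)).
Proof.
move=> N_gt0; rewrite (card_balanced_torus_int N_gt0 (disjoint_descents_ascents a) (erefl _)).
  by rewrite card_ord.
by rewrite card_descents_ascents.
Qed.

Theorem proposition6p2 (N p : nat) (hN : (1 <= N)%nat) (hp : (1 <= p)%nat) :
  delta p 2 N =
  / 2 ^ (p - 1) *
  sum_f_R0 (fun k => INR 'C(p, 2 * k) *
                     torus_int N (fun th => mean_abs N th ^ (2 * k))) p.
Proof.
case: p hp => // q _.
have N_neq0 : INR N <> 0 by apply: not_0_INR; case: N hN.
rewrite /delta delta_count_balanced INRE natr_sum.
under eq_bigr => a _ do rewrite -INRE card_balanced_descents //.
rewrite (@sum_descents q _ (fun k =>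
           INR N ^ q.+1 * torus_int N (fun th => mean_abs N th ^ (2 * k)))).
rewrite sum_f_R0E big_mkord RdivE mulr_suml [RHS]RmultE mulr_sumr.
apply: eq_bigr => k _; rewrite -mulr_natr -INRE mult_INR subSS subn0.
rewrite -!RmultE -RinvE Rpow_mult_distr (_ : INR 2 = 2) /=; last by rewrite /=; ring.
by field; split; [|split]; try apply: pow_nonzero; lra.
Qed.
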